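(* As formal power series in $Q$ with coefficients in $\mathbb{Z}[T]$, $$\sum_{k=1}^{\infty}\frac{F(k)}{\prod_{i=1}^{k}(1-Q^iT^{2(i-1)})^2}=\frac{1}{\prod_{i=1}^{\infty}(1-Q^iT^{2(i-1)})},$$ where $F(1)=Q^2T^2-Q+1$ and, for $k\ge2$, $F(k)$ is the sum of the two entries of $V_k=M_{k,k}M_{k,k-1}\cdots M_{k,2}V_{k,1}$ with $$V_{k,1}=\begin{bmatrix}Q^{2k}T^{4(k-1)}(T^2-1)\\ Q^kT^{2(k-1)}\end{bmatrix},\quad M_{k,s}=\begin{bmatrix}Q^{2(k-s+1)}T^{4(k-s)}(T^2-1)+(1-Q^{k-s+1}T^{2(k-s)})^2 & Q^{k-s+1}T^{2(k-s)}(T^2-1)\\ Q^{k-s+1}T^{2(k-s)} & Q^{2(k-s+1)}T^{4(k-s)}T^2\end{bmatrix}\ (2\le s\le k).$$ *)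

From mathcomp Require Import all_boot all_order all_algebra.
Set Implicit Arguments. Unset Strict Implicit. Unset Printing Implicit Defensive.
Import GRing.Theory Num.Theory.
Local Open Scope ring_scope.

Notation ZT := {poly int}.
Notation PQ := {poly ZT}.

Definition Qv : PQ := 'X.
Definition Tv : PQ := ('X : ZT)%:P.

Definition fac (i : nat) : PQ := 1 - Qv ^+ i * Tv ^+ (2 * (i - 1)).

Definition Mks (k s : nat) : 'M[PQ]_2 :=
  let e := (k - s + 1)%N in
  let d := (k - s)%N in
  \matrix_(a < 2, b < 2)
    if a == 0 :> nat then
      (if b == 0 :> nat then
         Qv ^+ (2 * e) * Tv ^+ (4 * d) * (Tv ^+ 2 - 1)
           + (1 - Qv ^+ e * Tv ^+ (2 * d)) ^+ 2
       else Qv ^+ e * Tv ^+ (2 * d) * (Tv ^+ 2 - 1))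
    else
      (if b == 0 :> nat then Qv ^+ e * Tv ^+ (2 * d)
       else Qv ^+ (2 * e) * Tv ^+ (4 * d) * Tv ^+ 2).

Definition Vk1 (k : nat) : 'cV[PQ]_2 :=
  \col_(a < 2)
    if a == 0 :> nat then Qv ^+ (2 * k) * Tv ^+ (4 * (k - 1)) * (Tv ^+ 2 - 1)
    else Qv ^+ k * Tv ^+ (2 * (k - 1)).

(* Vrec k j = M_{k,j+1} M_{k,j} ... M_{k,2} V_{k,1} *)
Fixpoint Vrec (k j : nat) : 'cV[PQ]_2 :=
  match j with
  | 0 => Vk1 k
  | j'.+1 => Mks k j'.+2 *m Vrec k j'
  end.

Definition Vk (k : nat) : 'cV[PQ]_2 := Vrec k (k - 1).

Definition F (k : nat) : PQ :=
  if k == 1%N then Qv ^+ 2 * Tv ^+ 2 - Qv + 1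
  else Vk k 0 0 + Vk k 1 0.

Definition fps := nat -> ZT.

Definition fps_of_poly (p : PQ) : fps := fun n => p`_n.

Definition fps_mul (f g : fps) : fps :=
  fun n => \sum_(i < n.+1) f i * g (n - i)%N.

(* coefficients of the multiplicative inverse, for f with unit constant term:
   g_0 = c, g_(m+1) = - c * sum_(j=1)^(m+1) f_j g_(m+1-j), where c = (f 0)^-1 *)
Fixpoint fps_inv_seq (f : fps) (n : nat) : seq ZT :=
  match n with
  | 0 => [:: (f 0%N)^-1]
  | m.+1 => let s := fps_inv_seq f m in
            rcons s (- ((f 0%N)^-1 * \sum_(i < m.+1) f i.+1 * nth 0 s (m - i)%N))
  end.

Definition fps_inv (f : fps) : fps := fun n => nth 0 (fps_inv_seq f n) n.

(* convergence in the Q-adic topology: every coefficient is eventually constant *)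
Definition fps_lim (a : nat -> fps) (l : fps) : Prop :=
  forall n, exists K, forall m, (K <= m)%N -> a m n = l n.

Definition lhs_partial (N : nat) : fps :=
  fun n => \sum_(1 <= k < N.+1)
     fps_mul (fps_of_poly (F k))
             (fps_inv (fps_of_poly (\prod_(1 <= i < k.+1) fac i ^+ 2))) n.

Definition rhs_partial_prod (N : nat) : fps :=
  fps_of_poly (\prod_(1 <= i < N.+1) fac i).

From mathcomp Require Import all_boot all_order all_algebra.
From mathcomp Require Import ring zify.
Set Implicit Arguments. Unset Strict Implicit. Unset Printing Implicit Defensive.
Import GRing.Theory.
Local Open Scope ring_scope.

(* Substituting y = -Q and z = Q T^2 turns 1 - Q^i T^(2(i-1)) into 1 + y z^(i-1) and
   M_{k,s} into the matrix [qmx (k - s)], which depends on k - s only.  Hence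
   F(k) = (w_(k-1) V_{k,1})_0 with w_n = (1, 1) qmx 0 ... qmx (n-1), and the first entry a_n
   of w_n satisfies a_1 = F(1), a_k = (1 - Q^k T^(2(k-1)))^2 a_(k-1) + F(k): the N-th
   partial sum on the left telescopes to a_N / P_N^2, where P_N = prod_(i<=N) (1 - Q^i T^(2(i-1))).
   By induction a_n = sum_j y^j z^C(j,2) c(n,j) for a deformation c(n,j) of the Gaussian
   binomial [n j]_z agreeing with it modulo z^(n+1-j), while the q-binomial theorem gives
   P_n = sum_j y^j z^C(j,2) [n j]_z.  Since Q^(n+1) divides y^j z^(n+1-j), a_N = P_N modulo
   Q^(N+1), so the N-th partial sum is 1/P_N, hence 1/P_oo, modulo Q^(N+1). *)

Lemma eq_of_lincomb (R : comPzRingType) (a b x1 y1 x2 y2 c1 c2 : R) :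
  x1 = y1 -> x2 = y2 -> a - b = c1 * (x1 - y1) + c2 * (x2 - y2) -> a = b.
Proof. by move=> -> ->; rewrite !subrr !mulr0 addr0 => /subr0_eq. Qed.

Lemma sum_ord_recl_split (V : nmodType) n (f g h : nat -> V) :
    f 0%N = g 0%N -> g n.+1 = 0 -> (forall j, (j <= n)%N -> f j.+1 = g j.+1 + h j) ->
  \sum_(j < n.+2) f j = \sum_(j < n.+1) g j + \sum_(j < n.+1) h j.
Proof.
move=> fg0 gn fgS.
have -> : \sum_(j < n.+1) g j = \sum_(j < n.+2) g j by rewrite [RHS]big_ord_recr /= gn addr0.
rewrite [\sum_(j < n.+2) f j]big_ord_recl [\sum_(j < n.+2) g j]big_ord_recl.
rewrite fg0 -addrA -big_split /=; congr (_ + _).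
by apply: eq_bigr => j _; rewrite /bump /= add1n fgS // -ltnS.
Qed.

Section QBinomial.
Variables (R : comPzRingType) (z : R).

Fixpoint qbinom n j : R :=
  match n, j with
  | 0, 0 => 1
  | 0, _.+1 => 0
  | _.+1, 0 => 1
  | n.+1, j.+1 => z ^+ j.+1 * qbinom n j.+1 + qbinom n j
  end.

(* Equals [qbinom n j * \prod_(i < j) (1 - z ^+ (n - i))]; only the recursion is used. *)
Fixpoint cbinom n j : R :=
  match n, j with
  | 0, 0 => 1
  | 0, _.+1 => 0
  | _.+1, 0 => 1
  | n.+1, j.+1 => z ^+ j.+1 * cbinom n j.+1 + (1 - z ^+ (n + n - j).+1) * cbinom n j
  end.

Lemma qbinomn0 n : qbinom n 0 = 1. Proof. by case: n. Qed.
Lemma cbinomn0 n : cbinom n 0 = 1. Proof. by case: n. Qed.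

Lemma qbinom_small n j : (n < j)%N -> qbinom n j = 0.
Proof. by elim: n j => [|n IH] [|j] //= ltnj; rewrite !IH ?mulr0 ?addr0 // ltnW. Qed.

Lemma cbinom_small n j : (n < j)%N -> cbinom n j = 0.
Proof. by elim: n j => [|n IH] [|j] //= ltnj; rewrite !IH ?mulr0 ?addr0 // ltnW. Qed.

Theorem q_binomial n y :
  \prod_(i < n) (1 + y * z ^+ i) = \sum_(j < n.+1) y ^+ j * z ^+ 'C(j, 2) * qbinom n j.
Proof.
elim: n y => [|n IH] y; first by rewrite big_ord0 big_ord1 /= !mulr1.
rewrite big_ord_recl mulr1.
under eq_bigr => i _ do rewrite lift0 exprS mulrA.
rewrite IH mulrDl mul1r mulr_sumr.
symmetry; apply: (@sum_ord_recl_split _ n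
  (fun j => y ^+ j * z ^+ 'C(j, 2) * qbinom n.+1 j)
  (fun j => (y * z) ^+ j * z ^+ 'C(j, 2) * qbinom n j)
  (fun j => y * ((y * z) ^+ j * z ^+ 'C(j, 2) * qbinom n j))) => [|| j _].
- by rewrite !qbinomn0.
- by rewrite qbinom_small ?mulr0.
- by rewrite /= binS bin1 exprD !exprS exprMn; ring.
Qed.

Lemma cbinomS n j :
  cbinom n.+1 j.+1 = z ^+ j.+1 * cbinom n j.+1 + (1 - z ^+ (n + n - j).+1) * cbinom n j.
Proof. by []. Qed.

Lemma cbinom_ratio n j : (j <= n)%N ->
  (1 - z ^+ j.+1) * cbinom n j.+1 = (1 - z ^+ (n - j)) ^+ 2 * cbinom n j.
Proof.
elim: n j => [|n IH] [|j] // lejn.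
- by rewrite /= subrr expr0n !mulr0 mul0r.
- have := IH 0%N isT; rewrite cbinomS !cbinomn0 !subn0 !mulr1 => IH0.
  by rewrite mulrDr mulrCA IH0 !exprS exprD; ring.
have [->|nejn] := eqVneq j n.
  by rewrite cbinom_small // subSS subnn subrr expr0n mulr0 mul0r.
have ltjn : (j < n)%N by rewrite ltn_neqAle nejn.
move: (IH j.+1 ltjn) (IH j (ltnW ltjn)); rewrite !cbinomS subSS.
have {ltjn nejn lejn IH} [m ->] : exists m, n = (j.+1 + m)%N by exists (n - j.+1)%N; lia.
rewrite addKn (_ : j.+1 + m - j = m.+1)%N; last by lia.
move=> IH1 IH0.
apply: (eq_of_lincomb IH1 IH0 (c1 := z ^+ j.+2) (c2 := 1 - z ^+ (j + m + m).+3)).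
have -> : (j.+1 + m + (j.+1 + m) - j.+1 = (j + m + m).+1)%N by lia.
have -> : (j.+1 + m + (j.+1 + m) - j = (j + m + m).+2)%N by lia.
by rewrite !exprS !exprD; ring.
Qed.

Lemma cbinom_qbinom n j : exists r, cbinom n j = qbinom n j + z ^+ (n.+1 - j) * r.
Proof.
elim: n j => [|n IH] [|j]; try by exists 0; rewrite mulr0 addr0 ?cbinomn0 ?qbinomn0.
have [lenj|ltjn] := leqP n.+1 j.
  by exists (cbinom n.+1 j.+1 - qbinom n.+1 j.+1); rewrite subSS (eqP lenj) mul1r addrC subrK.
rewrite /=; have [r1 ->] := IH j.+1; have [r0 ->] := IH j.
have {ltjn IH} [m ->] : exists m, n = (j + m)%N by exists (n - j)%N; lia.
exists (z ^+ j * r1 + r0 - z ^+ (j + m) * (qbinom (j + m) j + z ^+ m.+1 * r0)).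
have -> : (j + m + (j + m) - j = j + m + m)%N by lia.
rewrite !subSS addKn (_ : (j + m).+1 - j = m.+1)%N; last by lia.
by rewrite !exprS !exprD; ring.
Qed.

End QBinomial.

Lemma mulmx_row2 (R : pzSemiRingType) n (u : 'rV[R]_2) (M : 'M[R]_(2, n)) j :
  (u *m M) 0 j = u 0 0 * M 0 j + u 0 1 * M 1 j.
Proof.
by rewrite mxE big_ord_recl big_ord1; congr (u 0 _ * M _ j + u 0 _ * M _ j); apply: val_inj.
Qed.

Section QRow.
Variables (R : comPzRingType) (y z : R).

Definition qmx d : 'M[R]_2 :=
  \matrix_(a < 2, b < 2)
    if a == 0 :> nat then
      (if b == 0 :> nat then 1 + y * z ^+ d * (2 - z ^+ d.+1) else z ^+ d * (z + y))
    else
      (if b == 0 :> nat then - (y * z ^+ d) else - (y * z ^+ d * z ^+ d.+1)).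

Fixpoint qrow n : 'rV[R]_2 := if n is m.+1 then qrow m *m qmx m else const_mx 1.

Definition qweight j := y ^+ j * z ^+ 'C(j, 2).

Definition qalpha n := \sum_(j < n.+1) qweight j * cbinom z n j.
Definition qbeta n := \sum_(j < n.+1) qweight j * z ^+ (n - j) * cbinom z n j.

Lemma qweightS j : qweight j.+1 = y * z ^+ j * qweight j.
Proof. by rewrite /qweight binS bin1 exprD exprS; ring. Qed.

Lemma qalphaS n :
  qalpha n.+1 = qalpha n * (1 + y * z ^+ n * (2 - z ^+ n.+1)) + qbeta n * - (y * z ^+ n).
Proof.
rewrite /qalpha (@sum_ord_recl_split _ n
  (fun j => qweight j * cbinom z n.+1 j) (fun j => qweight j * cbinom z n j)
  (fun j => y * z ^+ n * (qweight j * cbinom z n j * (2 - z ^+ n.+1)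
                          - qweight j * z ^+ (n - j) * cbinom z n j))) => [|||j lejn].
- rewrite -mulr_sumr sumrB -!mulr_suml -/(qalpha n) -/(qbeta n); ring.
- by rewrite !cbinomn0.
- by rewrite cbinom_small ?mulr0.
have {lejn} [m ->] : exists m, n = (j + m)%N by exists (n - j)%N; lia.
have zC : z ^+ j.+1 * cbinom z (j + m) j.+1
          = cbinom z (j + m) j.+1 - (1 - z ^+ (j + m - j)) ^+ 2 * cbinom z (j + m) j.
  by rewrite -cbinom_ratio ?leq_addr //; ring.
rewrite cbinomS zC qweightS addKn (_ : j + m + (j + m) - j = j + m + m)%N; last by lia.
by rewrite !exprS !exprD; ring.
Qed.

Lemma qbetaS n :
  qbeta n.+1 = qalpha n * (z ^+ n * (z + y)) + qbeta n * - (y * z ^+ n * z ^+ n.+1).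
Proof.
rewrite /qbeta (@sum_ord_recl_split _ n
  (fun j => qweight j * z ^+ (n.+1 - j) * cbinom z n.+1 j)
  (fun j => z ^+ n.+1 * (qweight j * cbinom z n j))
  (fun j => y * z ^+ n * (qweight j * cbinom z n j
                          - qweight j * z ^+ (n - j) * cbinom z n j * z ^+ n.+1))) => [|||j lejn].
- rewrite -!mulr_sumr sumrB -mulr_suml -/(qalpha n) -/(qbeta n) !exprS; ring.
- by rewrite !cbinomn0 subn0; ring.
- by rewrite cbinom_small ?mulr0.
have {lejn} [m ->] : exists m, n = (j + m)%N by exists (n - j)%N; lia.
rewrite cbinomS qweightS subSS addKn (_ : j + m + (j + m) - j = j + m + m)%N; last by lia.
by rewrite !exprS !exprD; ring.
Qed.

Lemma qrow_closed n : qrow n 0 0 = qalpha n /\ qrow n 0 1 = qbeta n.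
Proof.
elim: n => [|n [IHa IHb]].
  by rewrite /qalpha /qbeta !big_ord1 /qweight !mxE /=; split; ring.
by rewrite /= !mulmx_row2 IHa IHb qalphaS qbetaS !mxE.
Qed.

Lemma qalpha_prod_mod w y' z' n : y = w * y' -> z = w * z' ->
  exists r, qalpha n = \prod_(i < n) (1 + y * z ^+ i) + w ^+ n.+1 * r.
Proof.
move=> yE zE.
have [r Er] : exists r,
    \sum_(j < n.+1) qweight j * (cbinom z n j - qbinom z n j) = w ^+ n.+1 * r.
  apply: (big_ind (fun x => exists r, x = w ^+ n.+1 * r)).
  - by exists 0; rewrite mulr0.
  - by move=> _ _ [r1 ->] [r2 ->]; exists (r1 + r2); rewrite mulrDr.
  move=> [j ltjn] _ /=; have [r ->] := cbinom_qbinom z n j.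
  exists (y' ^+ j * z ^+ 'C(j, 2) * z' ^+ (n.+1 - j) * r).
  rewrite addrC addKr /qweight yE [in z ^+ (n.+1 - j)]zE !exprMn.
  by rewrite -[in w ^+ n.+1](subnKC (ltnW ltjn)) exprD; ring.
exists r; rewrite q_binomial -Er -big_split /=.
by apply: eq_bigr => j _; rewrite /qweight; ring.
Qed.

End QRow.

Section Truncation.
Variable R : nzSemiRingType.
Implicit Types p q : {poly R}.

Lemma take_polyM n p q : take_poly n (p * q) = take_poly n (take_poly n p * take_poly n q).
Proof.
apply/polyP => i; rewrite !coef_take_poly; case: ltnP => // ltin.
rewrite !coefM; apply: eq_bigr => -[j /= ltji] _.
by rewrite !coef_take_poly !(leq_ltn_trans _ ltin) ?leq_subr // -ltnS.
Qed.

Lemma take_poly_mulr n p q q' :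
  take_poly n q = take_poly n q' -> take_poly n (p * q) = take_poly n (p * q').
Proof. by move=> Eq; rewrite take_polyM Eq -take_polyM. Qed.

Lemma take_poly_mull n p p' q :
  take_poly n p = take_poly n p' -> take_poly n (p * q) = take_poly n (p' * q).
Proof. by move=> Ep; rewrite take_polyM Ep -take_polyM. Qed.

Lemma take_polyDXnM n m p q : (n <= m)%N -> take_poly n (p + 'X^m * q) = take_poly n p.
Proof.
by move=> lenm; rewrite take_polyD -commr_polyXn take_polyMXn (eqP lenm) take_poly0l mul0r addr0.
Qed.

Lemma take_poly_prod1 n I (r : seq I) (P : pred I) (F : I -> {poly R}) :
    (forall i, P i -> take_poly n (F i) = take_poly n 1) ->
  take_poly n (\prod_(i <- r | P i) F i) = take_poly n 1.
Proof.
move=> F1; apply: (big_ind (fun p => take_poly n p = take_poly n 1)) => // p q Ep Eq.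
by rewrite (take_poly_mull _ Ep) (take_poly_mulr _ Eq) mulr1.
Qed.

End Truncation.

Lemma take_poly_inv_unique (R : comNzRingType) n (p h g : {poly R}) :
    take_poly n (p * h) = take_poly n 1 -> take_poly n (p * g) = take_poly n 1 ->
  take_poly n h = take_poly n g.
Proof.
move=> ph pg; rewrite -[h]mulr1 (take_poly_mulr _ (esym pg)) mulrA [h * p]mulrC.
by rewrite (take_poly_mull _ ph) mul1r.
Qed.

Lemma size_fps_inv_seq f m : size (fps_inv_seq f m) = m.+1.
Proof. by elim: m => //= m IH; rewrite size_rcons IH. Qed.

Lemma nth_fps_inv_seq f m i : (i <= m)%N -> nth 0 (fps_inv_seq f m) i = fps_inv f i.
Proof.
elim: m => [|m IH] leim; first by case: i leim.
case: (ltngtP i m.+1) leim => // [ltim _|-> _]; last by [].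
by rewrite /= nth_rcons size_fps_inv_seq ltim IH.
Qed.

Lemma fps_invS f m :
  fps_inv f m.+1 = - ((f 0%N)^-1 * \sum_(i < m.+1) f i.+1 * fps_inv f (m - i)%N).
Proof.
rewrite {1}/fps_inv /= nth_rcons size_fps_inv_seq ltnn eqxx.
by congr (- (_ * _)); apply: eq_bigr => i _; rewrite nth_fps_inv_seq // leq_subr.
Qed.

Lemma fps_mul_inv f m : f 0%N \is a GRing.unit -> fps_mul f (fps_inv f) m = (m == 0%N)%:R.
Proof.
move=> f0U; case: m => [|m]; first by rewrite /fps_mul big_ord1 /fps_inv /= mulrV.
by rewrite /fps_mul big_ord_recl fps_invS mulrN mulrA mulrV // mul1r addNr.
Qed.

Lemma fps_inv_eq n f g : (forall i, (i < n)%N -> f i = g i) ->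
  forall i, (i < n)%N -> fps_inv f i = fps_inv g i.
Proof.
move=> fg; elim/ltn_ind => -[|i] IH ltin; first by rewrite /fps_inv /= fg.
rewrite !fps_invS fg; last by lia.
congr (- (_ * _)); apply: eq_bigr => -[j ltji] _ /=.
by rewrite fg ?IH //; lia.
Qed.

Definition fps_inv_trunc n (p : PQ) : PQ := \poly_(i < n) fps_inv (fps_of_poly p) i.

Lemma coefM_trunc (p : PQ) h n k :
  (k < n)%N -> (p * \poly_(i < n) h i)`_k = fps_mul (fps_of_poly p) h k.
Proof.
move=> ltkn; rewrite coefM; apply: eq_bigr => -[j ltjk] _ /=.
by rewrite coef_poly (leq_ltn_trans (leq_subr _ _) ltkn).
Qed.

Lemma take_poly_mul_fps_inv_trunc n (p : PQ) :
  p`_0 \is a GRing.unit -> take_poly n (p * fps_inv_trunc n p) = take_poly n 1.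
Proof.
move=> p0U; apply/polyP => i; rewrite !coef_take_poly; case: ifP => // ltin.
by rewrite coefM_trunc // fps_mul_inv // coef1.
Qed.

Definition QT2 : PQ := Qv * Tv ^+ 2.

Lemma Mks_qmx k s : Mks k s = qmx (- Qv) QT2 (k - s).
Proof.
apply/matrixP => a b; rewrite !mxE addn1.
move: (k - s)%N => d.
rewrite /QT2 !mulSn !mul0n !addn0 !exprD !exprMn !exprS.
case: a => [[|[|a]] //= _]; case: b => [[|[|b]] //= _]; ring.
Qed.

Definition wrow n : 'rV[PQ]_2 := qrow (- Qv) QT2 n.

Lemma wrowS n : wrow n.+1 = wrow n *m Mks n.+1 1.
Proof. by rewrite Mks_qmx subn1. Qed.

Lemma wrow_Vrec i j k : (i + j).+1 = k -> wrow i *m Vrec k j = wrow (i + j) *m Vk1 k.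
Proof.
elim: j i => [|j IH] i ijk; first by rewrite addn0.
rewrite /= mulmxA Mks_qmx (_ : k - j.+2 = i)%N; last by lia.
by rewrite (_ : wrow i *m _ = wrow i.+1) // IH addSnnS.
Qed.

Lemma F_wrow k : (1 < k)%N -> F k = (wrow k.-1 *m Vk1 k) 0 0.
Proof.
move=> lt1k; rewrite /F gtn_eqF // /Vk -(@wrow_Vrec 0) ?add0n; last by lia.
by rewrite mulmx_row2 !mxE !mul1r subn1.
Qed.

Lemma F1_wrow : F 1 = wrow 1 0 0.
Proof. by rewrite /F /= mulmx_row2 !mxE /= /QT2; ring. Qed.

Lemma wrow_F k : (1 < k)%N -> wrow k 0 0 = fac k ^+ 2 * wrow k.-1 0 0 + F k.
Proof.
move=> lt1k; rewrite F_wrow // -(prednK (ltnW lt1k)) wrowS !mulmx_row2 /Mks /Vk1 /fac !mxE /=.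
by rewrite subn1 addn1; ring.
Qed.

Definition facprod n : PQ := \prod_(1 <= i < n.+1) fac i.

Definition facprod_inf : fps := fun n => (facprod n)`_n.

Lemma facprodS n : facprod n.+1 = facprod n * fac n.+1.
Proof. by rewrite /facprod big_nat_recr. Qed.

Lemma facprod_qform n : facprod n = \prod_(i < n) (1 + - Qv * QT2 ^+ i).
Proof.
rewrite /facprod big_add1 /= big_mkord; apply: eq_bigr => i _.
by rewrite /fac /QT2 subSS subn0 exprMn -exprM exprS; ring.
Qed.

Lemma take_poly_fac n i : (n <= i)%N -> take_poly n (fac i) = take_poly n 1.
Proof. by move=> leni; rewrite /fac /Qv -mulrN take_polyDXnM. Qed.

Lemma take_facprod n m : (n <= m)%N -> take_poly n.+1 (facprod m) = take_poly n.+1 (facprod n).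
Proof.
move=> lenm; have tail1 : take_poly n.+1 (\prod_(n.+1 <= i < m.+1) fac i) = take_poly n.+1 1.
  rewrite big_nat_cond; apply: take_poly_prod1 => i /andP[/andP[lei _] _].
  exact: take_poly_fac.
by rewrite /facprod (@big_cat_nat _ _ _ n.+1) //= (take_poly_mulr _ tail1) mulr1.
Qed.

Lemma coef_facprod i m : (i <= m)%N -> (facprod m)`_i = (facprod i)`_i.
Proof.
move=> leim; have := congr1 (fun p : PQ => p`_i) (take_facprod leim).
by rewrite /= !coef_take_poly ltnSn.
Qed.

Lemma facprod_coef0 n : (facprod n)`_0 = 1.
Proof. by rewrite coef_facprod // /facprod big_geq // coef1. Qed.

Lemma take_poly_mul_inv_facprod n k e :
  take_poly n (facprod k ^+ e * fps_inv_trunc n (facprod k ^+ e)) = take_poly n 1.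
Proof.
apply: take_poly_mul_fps_inv_trunc.
have -> : (facprod k ^+ e)`_0 = 1.
  by elim: e => [|e IH]; rewrite ?expr0 ?coef1 // exprS coef0M facprod_coef0 IH mulr1.
exact: unitr1.
Qed.

Lemma take_wrow_facprod n m : (n <= m.+1)%N -> take_poly n (wrow m 0 0) = take_poly n (facprod m).
Proof.
move=> lenm; rewrite /wrow (proj1 (qrow_closed _ _ m)) facprod_qform.
have [r ->] := @qalpha_prod_mod _ (- Qv) QT2 Qv (-1) (Tv ^+ 2) m (esym (mulrN1 _)) erefl.
exact: take_polyDXnM.
Qed.

Lemma lhs_partialE m n :
  lhs_partial m n = (\sum_(1 <= k < m.+1) F k * fps_inv_trunc n.+1 (facprod k ^+ 2))`_n.
Proof.
rewrite /lhs_partial coef_sum; apply: eq_bigr => k _.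
by rewrite /fps_inv_trunc coefM_trunc // /facprod prodrXl.
Qed.

Lemma take_lhs_sum_telescope n m : (0 < m)%N ->
  take_poly n (\sum_(1 <= k < m.+1) F k * fps_inv_trunc n (facprod k ^+ 2))
  = take_poly n (wrow m 0 0 * fps_inv_trunc n (facprod m ^+ 2)).
Proof.
elim: m => [//|m IH] _; have [->|m_gt0] := posnP m; first by rewrite big_nat1 F1_wrow.
have invS : take_poly n (fps_inv_trunc n (facprod m ^+ 2))
            = take_poly n (fac m.+1 ^+ 2 * fps_inv_trunc n (facprod m.+1 ^+ 2)).
  apply: (take_poly_inv_unique (take_poly_mul_inv_facprod n m 2)).
  by rewrite mulrA -exprMn -facprodS take_poly_mul_inv_facprod.
rewrite big_nat_recr //= take_polyD IH // (take_poly_mulr _ invS) -take_polyD.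
by rewrite (@wrow_F m.+1) //; congr take_poly; ring.
Qed.

Lemma lhs_partial_stable n m : (n < m)%N -> lhs_partial m n = fps_inv facprod_inf n.
Proof.
move=> ltnm; have coef_take (p : PQ) : p`_n = (take_poly n.+1 p)`_n.
  by rewrite coef_take_poly ltnSn.
have wrow_inv : take_poly n.+1 (wrow m 0 0 * fps_inv_trunc n.+1 (facprod m ^+ 2))
                = take_poly n.+1 (fps_inv_trunc n.+1 (facprod m)).
  have inv1 := take_poly_mul_inv_facprod n.+1 m 1; rewrite expr1 in inv1.
  rewrite (take_poly_mull _ (take_wrow_facprod _)) 1?ltnW //.
  apply: (take_poly_inv_unique _ inv1).
  by rewrite mulrA -expr2 take_poly_mul_inv_facprod.
rewrite lhs_partialE coef_take take_lhs_sum_telescope 1?(leq_ltn_trans _ ltnm) //.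
rewrite wrow_inv -coef_take coef_poly ltnSn.
apply: (@fps_inv_eq n.+1) => // i ltin.
by rewrite /fps_of_poly /facprod_inf coef_facprod //; lia.
Qed.

Theorem mainTheorem7 :
  exists (L P : fps),
    fps_lim lhs_partial L /\ fps_lim rhs_partial_prod P /\
    forall n : nat, L n = fps_inv P n.
Proof.
exists (fun n => lhs_partial n.+1 n), facprod_inf; split; [|split].
- by move=> n; exists n.+1 => m ltnm; rewrite !lhs_partial_stable.
- by move=> n; exists n => m lenm; apply: coef_facprod.
- by move=> n; rewrite lhs_partial_stable.
Qed.
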